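(* Let $c,k$ be positive integers and let $Z$ be a multigraph in which every edge has multiplicity less than $c$. Let $\{A,B\}$ be a partition of $V(Z)$ such that each vertex of $A$ has edge-degree at least $k$ in $Z$, $B$ is an independent set of $Z$, and each vertex of $B$ has at least $2$ distinct neighbors in $Z$. Then $Z$ has a cluster collection $\mathcal{C}$ such that each vertex of $A$ belongs to exactly one cluster of $\mathcal{C}$, no cluster of $\mathcal{C}$ has more than $k+1$ vertices, and each vertex of $Z/\mathcal{C}$ has edge-degree at least $k/c$.
   Context: Graphs are finite multigraphs without loops; when contracting edges, multiplicities of parallel edges created are summed and loops are deleted. The edge-degree of a vertex is the number of edges (with multiplicity) incident to it. A cluster collection of $Z$ is a nonempty collection $\mathcal{C}$ of pairwise disjoint nonempty vertex sets each inducing a connected subgraph of $Z$; $Z/\mathcal{C}$ is the multigraph obtained from $Z[\bigcup\mathcal{C}]$ by contracting all edges inside each cluster of $\mathcal{C}$. *)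

(* A finite loopless multigraph on a finType V is given by a
   symmetric multiplicity function m : V -> V -> nat with m x x = 0. *)
From mathcomp Require Import all_boot all_order all_algebra.
Set Implicit Arguments. Unset Strict Implicit. Unset Printing Implicit Defensive.
Import Order.TTheory GRing.Theory Num.Theory.

Section MG.
Variable V : finType.
Variable m : V -> V -> nat.

Definition is_multigraph : Prop := (forall x y, m x y = m y x) /\ (forall x, m x x = 0).

Definition edeg (x : V) : nat := \sum_(y : V) m x y.

Definition nbrs (x : V) : {set V} := [set y | 0 < m x y].

Definition independent (B : {set V}) : Prop :=
  forall x y, x \in B -> y \in B -> m x y = 0.

Definition induced_connected (S : {set V}) : Prop :=
  forall x y, x \in S -> y \in S ->
    connect (fun u v => [&& u \in S, v \in S & 0 < m u v]) x y.

Definition cluster_collection (C : {set {set V}}) : Prop :=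
  [/\ C != set0,
      (forall X, X \in C -> X != set0),
      (forall X Y, X \in C -> Y \in C -> X != Y -> [disjoint X & Y]) &
      (forall X, X \in C -> induced_connected X)].

(* multiplicity of the edge between clusters X and Y in Z/C
   (only used for X <> Y: edges inside a cluster become loops and are deleted) *)
Definition cmult (X Y : {set V}) : nat := \sum_(x in X) \sum_(y in Y) m x y.

Definition quot_edeg (C : {set {set V}}) (X : {set V}) : nat :=
  \sum_(Y in C | Y != X) cmult X Y.

End MG.

From mathcomp Require Import all_boot all_order all_algebra.
Import Order.TTheory GRing.Theory Num.Theory.

Set Implicit Arguments.
Unset Strict Implicit.
Unset Printing Implicit Defensive.

(* Each a in A claims its first k neighbours outside A (all of them if it has
   fewer), and every claimed vertex is owned by one of its claimants; the
   clusters are the stars a |: owned a, so they have at most k + 1 vertices.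
   The star of a is adjacent to every neighbour of a in A and to every vertex
   that a claims but does not own, all of which lie in other stars, and each
   owned vertex has a second neighbour, which lies in A and hence in another
   star.  So the star of a has degree at least #|N(a) :&: A| + #|claim a| in
   Z/C, and c times this is at least k: either a claims k vertices, or it
   claims all of N(a) :\: A and then k <= edeg a <= c * #|N(a)|. *)

Lemma card_take_enum (T : finType) (D : {set T}) (n : nat) :
  #|[set x in take n (enum D)]| = minn n #|D|.
Proof.
by rewrite cardsE (card_uniqP _) ?take_uniq ?enum_uniq // size_take_min -cardE.
Qed.

Lemma card_support_le_sum (T : finType) (D : {set T}) (f : T -> nat) :
  #|[set x in D | 0 < f x]| <= \sum_(x in D) f x.
Proof.
rewrite -sum1_card big_mkcond [X in _ <= X]big_mkcond /=.
by apply: leq_sum => x _; rewrite inE; case: (x \in D); case: (f x).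
Qed.

Section Multigraph.
Variables (V : finType) (m : V -> V -> nat).

Lemma edeg_le_card_nbrs (c : nat) (x : V) :
  (forall y, m x y <= c) -> edeg m x <= #|nbrs m x| * c.
Proof.
move=> le_c; rewrite /edeg (bigID [in nbrs m x]) /= [X in _ + X]big1 => [|y].
  by rewrite addn0 -sum_nat_const leq_sum.
by rewrite inE -eqn0Ngt => /eqP.
Qed.

Lemma star_induced_connected (a : V) (S : {set V}) :
  (forall x y, m x y = m y x) -> (forall s, s \in S -> 0 < m a s) ->
  induced_connected m (a |: S).
Proof.
move=> msym adj x y xX yX.
set e := (fun u v => _ : bool).
have spoke u : u \in a |: S -> connect e a u /\ connect e u a.
  move=> uX; case/setU1P: (uX) => [-> | uS]; first by split; apply: connect0.
  have aX := setU11 a S.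
  by split; apply: connect1; rewrite /e aX uX //= ?[m u a]msym adj.
exact: connect_trans (spoke x xX).2 (spoke y yX).1.
Qed.

Lemma quot_edegE (C : {set {set V}}) (X : {set V}) :
  trivIset C ->
  quot_edeg m C X = \sum_(x in X) \sum_(y in cover (C :\ X)) m x y.
Proof.
move=> triC; rewrite /quot_edeg /cmult exchange_big /=.
apply: eq_bigr => x _.
rewrite big_trivIset; last exact: trivIsetS (subsetDl _ _) triC.
by apply: eq_bigl => Y; rewrite in_setD1 andbC.
Qed.

End Multigraph.

Section Stars.
Variables (V : finType) (m : V -> V -> nat) (A : {set V}) (k : nat).

Definition claim (a : V) : {set V} := [set b in take k (enum (nbrs m a :\: A))].

Definition owner (b : V) : option V := [pick a in A | b \in claim a].

Definition owned (a : V) : {set V} := [set b | owner b == Some a].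

Definition star (a : V) : {set V} := a |: owned a.

Definition stars : {set {set V}} := star @: A.

Definition outer (a : V) : {set V} := cover (stars :\ star a).

Lemma claim_sub (a : V) : claim a \subset nbrs m a :\: A.
Proof. by apply/subsetP => b; rewrite inE => /mem_take; rewrite mem_enum. Qed.

Lemma card_claim (a : V) : #|claim a| = minn k #|nbrs m a :\: A|.
Proof. exact: card_take_enum. Qed.

Lemma ownedP (a b : V) :
  b \in owned a -> [/\ a \in A, b \in claim a & b \notin A].
Proof.
rewrite inE /owner; case: pickP => // a' /andP [a'A bclaim] /eqP [<-].
by have := subsetP (claim_sub a') b bclaim; rewrite inE => /andP [].
Qed.

Lemma owned_adj (a b : V) : b \in owned a -> 0 < m a b.
Proof.
by case/ownedP => _ /(subsetP (claim_sub a)); rewrite !inE => /andP [].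
Qed.

Lemma owned_sub_claim (a : V) : owned a \subset claim a.
Proof. by apply/subsetP => b /ownedP []. Qed.

Lemma claim_owned (a b : V) :
  a \in A -> b \in claim a -> exists2 a', a' \in A & b \in owned a'.
Proof.
move=> aA bclaim; case E: (owner b) => [a'|].
  have ba' : b \in owned a' by rewrite inE E.
  by exists a' => //; case/ownedP: ba'.
by move: E; rewrite /owner; case: pickP => // /(_ a); rewrite aA bclaim.
Qed.

Lemma mem_star (a : V) : a \in star a.
Proof. exact: setU11. Qed.

Lemma mem_starA (a x : V) : x \in star a -> x \in A -> x = a.
Proof. by case/setU1P => [// | /ownedP [_ _ /negbTE ->]]. Qed.

Lemma star_disjoint (a a' : V) :
  a \in A -> a' \in A -> a != a' -> [disjoint star a & star a'].
Proof.
move=> aA a'A neq; apply/pred0P => x /=; apply/negbTE/andP => [[xa xa']].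
case xA: (x \in A).
  by move: neq; rewrite -(mem_starA xa xA) -(mem_starA xa' xA) eqxx.
case/setU1P: xa => [xa | ]; first by rewrite xa aA in xA.
case/setU1P: xa' => [xa' | ]; first by rewrite xa' a'A in xA.
by rewrite !inE => /eqP -> /eqP [aa']; rewrite aa' eqxx in neq.
Qed.

Lemma stars_trivIset : trivIset stars.
Proof.
apply/trivIsetP => _ _ /imsetP [a aA ->] /imsetP [a' a'A ->] neq.
by apply: star_disjoint => //; apply: contraNneq neq => ->.
Qed.

Lemma stars_containing (a : V) :
  a \in A -> [set X in stars | a \in X] = [set star a].
Proof.
move=> aA; apply/setP => X; rewrite !inE.
apply/andP/eqP => [[/imsetP [a' _ ->] aX] | ->].
  by rewrite (mem_starA aX aA).
by rewrite imset_f ?mem_star.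
Qed.

Lemma card_star (a : V) : #|star a| <= k.+1.
Proof.
rewrite cardsU1 -add1n leq_add ?leq_b1 //.
rewrite (leq_trans (subset_leq_card (owned_sub_claim a))) //.
by rewrite card_claim geq_minl.
Qed.

Lemma stars_cluster_collection :
  (forall x y, m x y = m y x) -> A != set0 -> cluster_collection m stars.
Proof.
move=> msym /set0Pn [a aA]; split.
- by apply/set0Pn; exists (star a); apply: imset_f.
- by move=> _ /imsetP [a' _ ->]; apply/set0Pn; exists a'; apply: mem_star.
- by have /trivIsetP := stars_trivIset.
- move=> _ /imsetP [a' _ ->].
  by apply: star_induced_connected => // b; apply: owned_adj.
Qed.

Lemma mem_outer (a a' y : V) :
  a \in A -> a' \in A -> a' != a -> y \in star a' -> y \in outer a.
Proof.
move=> aA a'A neq ya'; apply/bigcupP; exists (star a') => //.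
rewrite in_setD1 imset_f // andbT; apply: contraNneq neq => eq_star.
by apply/eqP/(mem_starA _ a'A); rewrite -eq_star mem_star.
Qed.

Lemma k_le_card_nbrsA_claim (c : nat) (a : V) :
  0 < c -> (forall y, m a y <= c) -> k <= edeg m a ->
  k <= (#|nbrs m a :&: A| + #|claim a|) * c.
Proof.
move=> c_gt0 le_c k_le_deg; rewrite card_claim.
case: (leqP k #|nbrs m a :\: A|) => _.
  by rewrite (leq_trans (leq_pmulr k c_gt0)) // leq_mul2r leq_addl orbT.
by rewrite cardsID (leq_trans k_le_deg) // edeg_le_card_nbrs.
Qed.

Hypothesis loopless : forall x, m x x = 0.
Hypothesis indep_compl : independent m (~: A).
Hypothesis nbrs_compl : forall b, b \in ~: A -> 2 <= #|nbrs m b|.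

Lemma compl_nbr_memA (b y : V) : b \notin A -> 0 < m b y -> y \in A.
Proof. by move=> bA; apply: contraTT => yA; rewrite indep_compl ?inE. Qed.

Lemma A_neq0 : 0 < #|V| -> A != set0.
Proof.
case/card_gt0P => v _; apply/set0Pn; case vA: (v \in A); first by exists v.
have /card_gt0P [y] : 0 < #|nbrs m v|.
  by apply: leq_trans (nbrs_compl _); rewrite ?inE ?vA.
by rewrite inE => vy; exists y; apply: compl_nbr_memA vy; rewrite vA.
Qed.

Lemma owned_outer_nbr (a b : V) :
  b \in owned a -> exists2 y, y \in outer a & 0 < m b y.
Proof.
case/ownedP => aA _ bA.
have /card_gt1P [y1 [y2 [y1b y2b neq]]] : 1 < #|nbrs m b|.
  by rewrite nbrs_compl ?inE.
have [y yb ya] : exists2 y, y \in nbrs m b & y != a.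
  by case: (eqVneq y1 a) => [e | ]; [exists y2; rewrite // -e eq_sym | exists y1].
rewrite inE in yb; exists y => //.
by apply: mem_outer (mem_star y) => //; apply: compl_nbr_memA yb.
Qed.

Lemma card_owned_le_outer (a : V) :
  #|owned a| <= \sum_(b in owned a) \sum_(y in outer a) m b y.
Proof.
rewrite -sum1_card leq_sum // => b /owned_outer_nbr [y yo by_gt0].
by rewrite (bigD1 y) //= (leq_trans by_gt0) ?leq_addr.
Qed.

Lemma nbrs_claim_sub (a : V) : a \in A ->
  (nbrs m a :&: A) :|: claim a \subset [set y in outer a | 0 < m a y] :|: owned a.
Proof.
move=> aA; apply/subsetP => y /setUP [/setIP [ay yA] | yc]; apply/setUP.
  rewrite inE in ay.
  have ya : y != a by apply: contraTneq ay => ->; rewrite loopless.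
  by left; rewrite inE ay (mem_outer aA yA ya (mem_star y)).
have [a' a'A ya'] := claim_owned aA yc.
case: (eqVneq a' a) => [<- | neq]; [by right | left].
have := subsetP (claim_sub a) y yc; rewrite !inE => /andP [_ ->].
by rewrite (mem_outer aA a'A neq (setU1r _ ya')).
Qed.

Lemma quot_edeg_star_ge (a : V) : a \in A ->
  #|nbrs m a :&: A| + #|claim a| <= quot_edeg m stars (star a).
Proof.
move=> aA.
have disj : [disjoint nbrs m a :&: A & claim a].
  apply/pred0P => y /=; apply/negbTE/andP => -[/setIP [_ yA]].
  by move/(subsetP (claim_sub a)); rewrite inE yA.
have /eqP <- : #|(nbrs m a :&: A) :|: claim a| == #|nbrs m a :&: A| + #|claim a|.
  by rewrite (leq_card_setU _ _).2.
have a_owned : a \notin owned a by apply/negP => /ownedP [_ _]; rewrite aA.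
rewrite (quot_edegE _ _ stars_trivIset) big_setU1 //=.
apply: leq_trans (subset_leq_card (nbrs_claim_sub aA)) _.
apply: leq_trans (leq_card_setU _ _).1 _.
by apply: leq_add; [apply: card_support_le_sum | apply: card_owned_le_outer].
Qed.

End Stars.

Local Open Scope ring_scope.

Theorem lemma1 (c k : nat) (V : finType) (m : V -> V -> nat) (A : {set V}) :
  (0 < c)%N -> (0 < k)%N ->
  (0 < #|V|)%N ->
  is_multigraph m ->
  (forall x y, (m x y < c)%N) ->
  (forall a, a \in A -> (k <= edeg m a)%N) ->
  independent m (~: A) ->
  (forall b, b \in ~: A -> (2 <= #|nbrs m b|)%N) ->
  exists C : {set {set V}},
    [/\ cluster_collection m C,
        (forall a, a \in A -> #|[set X in C | a \in X]| = 1%N),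
        (forall X, X \in C -> (#|X| <= k.+1)%N) &
        (forall X, X \in C -> (k%:R / c%:R : rat) <= (quot_edeg m C X)%:R)].
Proof.
move=> c_gt0 _ V_gt0 [msym loopless] m_lt_c degA indepB nbrsB.
exists (stars m A k); split.
- exact: stars_cluster_collection msym (A_neq0 indepB nbrsB V_gt0).
- by move=> a aA; rewrite stars_containing ?cards1.
- by move=> _ /imsetP [a _ ->]; apply: card_star.
- move=> _ /imsetP [a aA ->].
  rewrite ler_pdivrMr ?ltr0n // -natrM ler_nat.
  have m_le_c y : (m a y <= c)%N by apply: ltnW.
  apply: leq_trans (k_le_card_nbrsA_claim A c_gt0 m_le_c (degA a aA)) _.
  by rewrite leq_mul2r (quot_edeg_star_ge k loopless indepB nbrsB aA) orbT.
Qed.
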